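(* Let $n \ge 1$ and let $a_1, \dots, a_n$ be positive real numbers with $\sum_{i=1}^n a_i = 1$. Consider vectors $u_{(i,t)}$ indexed by $(i,t) \in [n] \times [3]$ subject to the following constraints: (1) $u_{(i,t)} \cdot u_{(i,t)} = 1$ for all $(i,t)$; (2) $u_{(i,1)} \cdot u_{(i,2)} = 0$ for all $i \in [n]$; (3) $u_{(i,3)} \cdot u_{(i,1)} = u_{(i,3)} \cdot u_{(i,2)} = \frac{1}{\sqrt{2}}$ for all $i \in [n]$; (4) $u_{(i,1)} \cdot u_{(i+1,1)} = u_{(i,2)} \cdot u_{(i+1,2)} = u_{(i,3)} \cdot u_{(i+1,3)} = \cos a_i$ for all $i \in [n]$, where the index $i+1$ is taken modulo $n$ (so $n+1$ means $1$). Then there exists a set $I \subseteq [n]$ with $\sum_{i \in I} a_i = \sum_{i \notin I} a_i$ if and only if there exists a family of vectors in $\mathbb{R}^2$ satisfying these constraints. *)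

From HB Require Import structures.
From mathcomp Require Import all_boot all_order all_algebra.
From mathcomp Require Import all_classical all_reals all_analysis.
Set Implicit Arguments. Unset Strict Implicit. Unset Printing Implicit Defensive.
Import Order.TTheory GRing.Theory Num.Theory.
Local Open Scope ring_scope.

Definition dot2 {R : realType} (u v : 'rV[R]_2) : R := \sum_(k < 2) u 0 k * v 0 k.

(* Constraints (1)-(4) for a family u indexed by [n] x [3]
   (the index t = 1,2,3 of the paper is 'I_3 element 0,1,2 here;
   the index i+1 mod n is the cyclic successor ordS i). *)
Definition feasible2 {R : realType} (n : nat) (a : 'I_n -> R)
    (u : 'I_n -> 'I_3 -> 'rV[R]_2) : Prop :=
  [/\ (forall i t, dot2 (u i t) (u i t) = 1),
      (forall i, dot2 (u i 0) (u i 1) = 0),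
      (forall i, dot2 (u i 2) (u i 0) = (Num.sqrt 2)^-1 /\
                 dot2 (u i 2) (u i 1) = (Num.sqrt 2)^-1) &
      (forall i t, dot2 (u i t) (u (ordS i) t) = cos (a i))].

From HB Require Import structures.
From mathcomp Require Import all_boot all_order all_algebra.
From mathcomp Require Import all_classical all_reals all_analysis.
From mathcomp Require Import ring lra.
Import Order.TTheory GRing.Theory Num.Theory.
Local Open Scope ring_scope.

(* Two unit vectors of the plane with inner product cos a, 0 < a < pi, differ by
   a rotation through +a or -a, the sign being that of their cross product.  So
   in a feasible family the first vectors u_(i,1) turn around the cycle by a
   signed sum of the a_i, which must be 0 modulo 2 pi since the cycle closes up;
   as its absolute value is at most 1 < 2 pi it is 0, i.e. the signs split the
   a_i into two halves of equal sum.  Conversely, signs with vanishing sum give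
   angles phi_k (the partial signed sums), and rotating the fixed frame
   (e_1, e_2, (e_1 + e_2) / sqrt 2) by phi_k satisfies all the constraints. *)

Section PlaneRotations.
Context {R : realType}.
Implicit Types (v w : 'rV[R]_2) (p q a th : R).

Definition row2 p q : 'rV[R]_2 := \row_(k < 2) if val k == 0%N then p else q.

Definition cross2 v w : R := v 0 0 * w 0 1 - v 0 1 * w 0 0.

Definition rotate th v : 'rV[R]_2 :=
  row2 (cos th * v 0 0 - sin th * v 0 1) (sin th * v 0 0 + cos th * v 0 1).

Lemma row2_0 p q : row2 p q 0 0 = p. Proof. by rewrite mxE. Qed.

Lemma row2_1 p q : row2 p q 0 1 = q. Proof. by rewrite mxE. Qed.

Lemma rV2P v w : v 0 0 = w 0 0 -> v 0 1 = w 0 1 -> v = w.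
Proof.
move=> e0 e1; apply/rowP => k.
have [->|->] : k = 0 \/ k = 1.
  by case: k => [[|[|//]] Hk]; [left|right]; apply/val_inj.
- exact: e0.
- exact: e1.
Qed.

Lemma dot2E v w : dot2 v w = v 0 0 * w 0 0 + v 0 1 * w 0 1.
Proof.
rewrite /dot2 big_ord_recr big_ord1 /=.
by congr (v 0 _ * w 0 _ + v 0 _ * w 0 _); apply/val_inj.
Qed.

Lemma cross2vv v : cross2 v v = 0.
Proof. by rewrite /cross2 mulrC subrr. Qed.

Lemma dot2_cross2_sqr v w :
  dot2 v w ^+ 2 + cross2 v w ^+ 2 = dot2 v v * dot2 w w.
Proof. by rewrite !dot2E /cross2; ring. Qed.

Lemma rotate0 v : rotate 0 v = v.
Proof. by apply: rV2P; rewrite /rotate !(row2_0, row2_1) cos0 sin0; ring. Qed.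

Lemma rotateD p q v : rotate q (rotate p v) = rotate (p + q) v.
Proof.
by apply: rV2P; rewrite /rotate !(row2_0, row2_1) cosD sinD; ring.
Qed.

Lemma dot2_rotate p q v w :
  dot2 (rotate p v) (rotate q w) = cos (p - q) * dot2 v w + sin (p - q) * cross2 v w.
Proof. by rewrite !dot2E /cross2 /rotate !row2_0 !row2_1 cosB sinB; ring. Qed.

Lemma rotate_dot_cross th v w : dot2 v v = 1 ->
  cos th = dot2 v w -> sin th = cross2 v w -> w = rotate th v.
Proof.
move=> vv c s; apply: rV2P; rewrite /rotate !(row2_0, row2_1) c s.
- by rewrite -[w 0 0]mulr1 -vv !dot2E /cross2; ring.
- by rewrite -[w 0 1]mulr1 -vv !dot2E /cross2; ring.
Qed.

Lemma unit_rotate_angle a v w : dot2 v v = 1 -> dot2 w w = 1 ->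
  dot2 v w = cos a -> 0 < a < pi ->
  w = rotate (if 0 <= cross2 v w then a else - a) v.
Proof.
move=> vv ww vw a_bound; apply: rotate_dot_cross => //.
  by case: ifP; rewrite ?cosN.
have sin_gt0 : 0 < sin a := sin_gt0_pi a_bound.
have cross_sqr : cross2 v w ^+ 2 = sin a ^+ 2.
  by move: (dot2_cross2_sqr v w); rewrite vv ww vw sin2cos2 mulr1 => <-; ring.
case: ifP => [cross_ge0|/negbT]; rewrite ?sinN.
  by apply/eqP; rewrite -(eqrXn2 (n := 2) _ (ltW sin_gt0) cross_ge0) // cross_sqr.
rewrite -ltNge => cross_lt0; apply/eqP.
by rewrite eqr_oppLR -(eqrXn2 (n := 2) _ (ltW sin_gt0)) ?oppr_ge0 ?ltW // sqrrN cross_sqr.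
Qed.

Lemma cos_rotate_fixed th v : dot2 v v = 1 -> rotate th v = v -> cos th = 1.
Proof.
move=> vv v_fixed; have := dot2_rotate 0 th v v.
by rewrite rotate0 v_fixed vv cross2vv mulr0 addr0 mulr1 sub0r cosN.
Qed.

Lemma cos_eq1_lt2pi (x : R) : `|x| < 2 * pi -> cos x = 1 -> x = 0.
Proof.
move=> x_small cos_x; apply/eqP/negPn/negP => x_neq0.
have x_pos : 0 < `|x| by rewrite normr_gt0.
set y := `|x| / 2.
have sin_y : 0 < sin y by apply: sin_gt0_pi; apply/andP; split; rewrite /y; lra.
have : cos (y + y) = 1.
  rewrite /y -splitr; have [x_ge0|x_lt0] := leP 0 x.
  - by rewrite ger0_norm.
  - by rewrite ltr0_norm // cosN.
by rewrite cosD; have := cos2Dsin2 y; nra.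
Qed.

End PlaneRotations.

Section CyclicPartialSums.
Context {V : zmodType} {m : nat}.
Implicit Types b : 'I_m.+1 -> V.

Definition psum b (k : nat) : V := \sum_(j < k) b (inord j).

Lemma psum0 b : psum b 0 = 0.
Proof. exact: big_ord0. Qed.

Lemma psumS b k : psum b k.+1 = psum b k + b (inord k).
Proof. exact: big_ord_recr. Qed.

Lemma psum_total b : psum b m.+1 = \sum_i b i.
Proof. by apply: eq_bigr => i _; rewrite inord_val. Qed.

Lemma psum_ordS b (i : 'I_m.+1) :
  \sum_i b i = 0 -> psum b (ordS i) = psum b i + b i.
Proof.
move=> b_sum0; have [i_lt_m|i_ge_m] := ltnP i m.
  by rewrite /= modn_small // psumS inord_val.
have -> : i = ord_max by apply/val_inj/anti_leq; rewrite -ltnS ltn_ord.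
by rewrite /= modnn psum0 -b_sum0 -psum_total psumS -[ord_max]inord_val.
Qed.

End CyclicPartialSums.

Lemma sum_signed (V : zmodType) n (b : 'I_n -> V) (I : {set 'I_n}) :
  \sum_i (if i \in I then b i else - b i) = \sum_(i in I) b i - \sum_(i in ~: I) b i.
Proof.
rewrite (bigID (mem I)) /= -sumrN; congr (_ + _).
  by apply: eq_bigr => i ->.
by apply: eq_big => [i|i /negbTE ->]; rewrite ?inE.
Qed.

Section Frame.
Context {R : realType}.

Definition frame0 (t : 'I_3) : 'rV[R]_2 :=
  let r := (Num.sqrt 2)^-1 in
  match val t with 0 => row2 1 0 | 1 => row2 0 1 | _ => row2 r r end.

Definition frame (th : R) (t : 'I_3) : 'rV[R]_2 := rotate th (frame0 t).

Lemma frame0_unit t : dot2 (frame0 t) (frame0 t) = 1.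
Proof.
case: t => [[|[|[|//]]] Ht]; rewrite /frame0 /= dot2E !(row2_0, row2_1).
- by rewrite mulr1 mulr0 addr0.
- by rewrite mulr1 mulr0 add0r.
- by rewrite -expr2 exprVn sqr_sqrtr //; lra.
Qed.

Lemma frame_dot p q t : dot2 (frame p t) (frame q t) = cos (p - q).
Proof. by rewrite dot2_rotate frame0_unit cross2vv mulr1 mulr0 addr0. Qed.

Lemma frame_feasible n (a : 'I_n -> R) (phi : 'I_n -> R) :
  (forall i, cos (phi i - phi (ordS i)) = cos (a i)) ->
  feasible2 a (fun i => frame (phi i)).
Proof.
have same_angle th s t : dot2 (frame th s) (frame th t) = dot2 (frame0 s) (frame0 t).
  by rewrite dot2_rotate subrr cos0 sin0 mul1r mul0r addr0.
move=> adj; split => [i t|i|i|i t].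
- by rewrite frame_dot subrr cos0.
- by rewrite same_angle /frame0 /= dot2E !(row2_0, row2_1) mulr0 mul0r addr0.
- by rewrite !same_angle /frame0 /= !dot2E !(row2_0, row2_1) !mulr1 !mulr0 addr0 add0r.
- by rewrite frame_dot.
Qed.
End Frame.

Section Reduction.
Context {R : realType} {m : nat}.

Lemma rotate_cycle (w : 'I_m.+1 -> 'rV[R]_2) (b : 'I_m.+1 -> R) :
  (forall i, w (ordS i) = rotate (b i) (w i)) -> w ord0 = rotate (\sum_i b i) (w ord0).
Proof.
move=> turn.
have chain k : (k <= m)%N -> w (inord k) = rotate (psum b k) (w ord0).
  elim: k => [_|k IH k_lt].
    by rewrite psum0 rotate0 -[ord0]inord_val.
  rewrite psumS -rotateD -(IH (ltnW k_lt)) -turn; congr w.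
  by apply/val_inj; rewrite /= !inordK ?modn_small // ltnS ltnW.
rewrite -psum_total psumS -rotateD -chain // -turn; congr w.
by apply/val_inj; rewrite /= inordK // modnn.
Qed.

Variable a : 'I_m.+1 -> R.

Lemma balanced_feasible :
  (exists I : {set 'I_m.+1}, \sum_(i in I) a i = \sum_(i in ~: I) a i) ->
  exists u, feasible2 a u.
Proof.
case=> I balanced.
pose b i := if i \in I then a i else - a i.
have b_sum0 : \sum_i b i = 0 by rewrite sum_signed balanced subrr.
exists (fun i => frame (psum b i)); apply: frame_feasible => i.
by rewrite psum_ordS // opprD addrA subrr sub0r cosN /b; case: ifP; rewrite ?cosN.
Qed.

Lemma feasible_balanced :
  (forall i, 0 < a i < pi) -> \sum_i a i < 2 * pi ->
  (exists u, feasible2 a u) ->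
  exists I : {set 'I_m.+1}, \sum_(i in I) a i = \sum_(i in ~: I) a i.
Proof.
move=> a_bound a_sum [u [u_unit _ _ adj]].
pose I := [set i | 0 <= cross2 (u i 0) (u (ordS i) 0)].
pose b i := if i \in I then a i else - a i.
have turn i : u (ordS i) 0 = rotate (b i) (u i 0).
  by rewrite /b inE; apply: unit_rotate_angle.
have cos_total : cos (\sum_i b i) = 1.
  apply: (cos_rotate_fixed _ _ (u_unit ord0 0)).
  by rewrite -(rotate_cycle (fun i => u i 0) b turn).
exists I; apply/eqP; rewrite -subr_eq0 -sum_signed; apply/eqP/cos_eq1_lt2pi => //.
apply: le_lt_trans a_sum; apply: le_trans (ler_norm_sum _ _ _) _.
apply: ler_sum => i _; have /andP[a_pos _] := a_bound i.
by rewrite /b; case: ifP => _; rewrite ?normrN gtr0_norm.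
Qed.

End Reduction.

Theorem lemma3p2 (R : realType) (n : nat) (hn : (1 <= n)%N) (a : 'I_n -> R)
    (hpos : forall i, 0 < a i) (hsum : \sum_(i < n) a i = 1) :
  (exists I : {set 'I_n}, \sum_(i in I) a i = \sum_(i in ~: I) a i) <->
  (exists u : 'I_n -> 'I_3 -> 'rV[R]_2, feasible2 a u).
Proof.
case: n hn a hpos hsum => [//|m] _ a hpos hsum.
have pi2 := @pi_ge2 R.
split; first exact: balanced_feasible.
apply: feasible_balanced => [i|]; last by rewrite hsum; lra.
have a_le1 : a i <= 1.
  by rewrite -hsum (bigD1 i) //= lerDl sumr_ge0 // => j _; apply/ltW.
by rewrite hpos /=; lra.
Qed.
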